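(* Fix a start state $x_0$, a finite set $\mathcal{D}$ of demonstrations, each a pair $(\tilde x_{0:T},\tilde a_{0:T-1})$ with $\tilde x_0=x_0$, a constraint candidate $C=(\psi,C_A)$, and a state $x^*$. For $p\in[0,1]$ let $C_p=(\psi_p,C_A)$ where $\psi_p(x^* )=p$ and $\psi_p(x)=\psi(x)$ for $x\neq x^*$. Call $C_p$ consistent with $\mathcal{D}$ if $\Phi_{C_p}(\tilde a_t,\tilde x_t)=1$ for every demonstration in $\mathcal{D}$ and every $t\in\{0,\dots,T-1\}$. Suppose $C_1$ is consistent with $\mathcal{D}$ and let $p^*=\max_{(\tilde x,\tilde a)\in\mathcal{D}}\max_{0\le t\le T-1}S(\tilde x_t,\tilde a_t,x^* )$. Then $C_p$ is consistent with $\mathcal{D}$ if and only if $p\ge p^*$, and for every $p\ge p^*$, $V^{soft}_{C_{p^*},0}(x_0)\le V^{soft}_{C_p,0}(x_0)$; equivalently (for any baseline $C^0$ with finite soft values) $F_{C_{p^*},0}(x_0)\le F_{C_p,0}(x_0)$, so that among all consistent $C_p$ the candidate $C_{p^*}$ maximizes the likelihood $\prod_{\text{demos}} e^{\mathbb{E}[R]}/e^{V^{soft}_{C_p,0}(x_0)}$ of the demonstrations.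
   Context: Finite state set $\mathcal{X}$, finite action set $\mathcal{A}$, horizon $T$, transition probabilities $S(x,a,x')$, running reward $r(x,a)$, terminal reward $w(x)$; the (expected) demonstration reward is $\mathbb{E}[R]=\mathbb{E}[\sum_{t=0}^{T-1}r(X_t,a_t)+w(X_T)]$, which does not depend on the constraint candidate. A constraint candidate $C=(\psi,C_A)$ with $\psi:\mathcal{X}\to[0,1]$, $C_A\subseteq\mathcal{A}$; $\Phi_C(a,x)=1$ iff $a\notin C_A$ and $S(x,a,\hat x)\le\psi(\hat x)$ for all $\hat x\in\mathcal{X}$ (else $0$); $W_C(x)=\{a:\Phi_C(a,x)=1\}$. Soft values (in the extended reals, $\log 0=-\infty$, $e^{-\infty}=0$, $0\cdot(-\infty)=0$): $V^{soft}_{C,T}(x)=w(x)$; $Q^{soft}_{C,t}(a,x)=r(x,a)+\sum_{x'}S(x,a,x')V^{soft}_{C,t+1}(x')$; $V^{soft}_{C,t}(x)=\log\sum_{a\in W_C(x)}e^{Q^{soft}_{C,t}(a,x)}$. $F_{C,t}(x)=\exp(V^{soft}_{C,t}(x)-V^{soft}_{C^0,t}(x))$ for a baseline candidate $C^0$. *)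

From HB Require Import structures.
From mathcomp Require Import all_boot all_order all_algebra.
From mathcomp Require Import all_classical all_reals all_analysis.
Set Implicit Arguments. Unset Strict Implicit. Unset Printing Implicit Defensive.
Import Order.TTheory GRing.Theory Num.Theory.
Local Open Scope ring_scope.

Section Defs.
Variables (R : realType) (X A : finType).

Definition candidate := ((X -> R) * {set A})%type.

Definition Phi (S : X -> A -> X -> R) (C : candidate) (a : A) (x : X) : bool :=
  (a \notin C.2) && [forall xh : X, S x a xh <= C.1 xh].

Local Open Scope ereal_scope.

Definition Qsoft (S : X -> A -> X -> R) (r : X -> A -> R)
  (Vnext : X -> \bar R) (a : A) (x : X) : \bar R :=
  (r x a)%:E + \sum_(x' : X) (S x a x')%:E * Vnext x'.

(* soft value with k steps remaining: Vrem 0 = w,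
   Vrem (k+1) x = log sum_{a in W_C(x)} exp(Q(a,x)) *)
Fixpoint Vrem (S : X -> A -> X -> R) (r : X -> A -> R) (w : X -> R)
  (C : candidate) (k : nat) : X -> \bar R :=
  match k with
  | 0%N => fun x => (w x)%:E
  | k'.+1 => fun x =>
      lne (\sum_(a : A | Phi S C a x) expeR (Qsoft S r (Vrem S r w C k') a x))
  end.

Definition Vsoft (S : X -> A -> X -> R) (r : X -> A -> R) (w : X -> R)
  (T : nat) (C : candidate) (t : nat) (x : X) : \bar R :=
  Vrem S r w C (T - t) x.

Definition Fsoft (S : X -> A -> X -> R) (r : X -> A -> R) (w : X -> R)
  (T : nat) (C0 C : candidate) (t : nat) (x : X) : \bar R :=
  expeR (Vsoft S r w T C t x - Vsoft S r w T C0 t x).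

Local Close Scope ereal_scope.

Definition Cp (C : candidate) (xstar : X) (p : R) : candidate :=
  (fun x => if x == xstar then p else C.1 x, C.2).

(* demonstrations: a finite family indexed by 'I_n, each a pair of a
   state trajectory and an action trajectory *)
Definition consistent (S : X -> A -> X -> R) (T n : nat)
  (D : 'I_n -> (nat -> X) * (nat -> A)) (C : candidate) : Prop :=
  forall i : 'I_n, forall t : nat, (t < T)%N -> Phi S C ((D i).2 t) ((D i).1 t).

Definition pstar (S : X -> A -> X -> R) (T n : nat)
  (D : 'I_n -> (nat -> X) * (nat -> A)) (xstar : X) : R :=
  \big[Num.max/0]_(i < n) \big[Num.max/0]_(t < T)
     S ((D i).1 t) ((D i).2 t) xstar.

End Defs.

From HB Require Import structures.
From mathcomp Require Import all_boot all_order all_algebra.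
From mathcomp Require Import all_classical all_reals all_analysis.
Set Implicit Arguments. Unset Strict Implicit. Unset Printing Implicit Defensive.
Import Order.TTheory GRing.Theory Num.Theory.
Local Open Scope ring_scope.

(* Raising the threshold psi(x* ) from p to q >= p only enlarges
   the sets W_C(x) of admissible actions, and the soft Bellman operator
   V |-> log sum_{a in W(x)} exp(r + S V) is monotone both in the action set
   and (as S >= 0) in V; by induction on the remaining horizon, the soft
   values of C_p are therefore nondecreasing in p.  Since C_1 admits every
   demonstrated step, the only constraint C_p can violate on a demonstration
   is S(x_t, a_t, x* ) <= p, so C_p is consistent iff p bounds all these
   transition probabilities, i.e. iff p >= p*.  The comparisons of F and of
   the demonstration likelihood follow because exp is monotone and a product
   of nonnegative extended reals is monotone in its factors. *)

Local Open Scope ereal_scope.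

Lemma lee_prod_nneg (R : realType) (I : Type) (s : seq I) (P : pred I)
    (f g : I -> \bar R) :
  (forall i, P i -> 0 <= f i <= g i) ->
  \prod_(i <- s | P i) f i <= \prod_(i <- s | P i) g i.
Proof.
move=> fg.
suff /andP[] : 0 <= \prod_(i <- s | P i) f i <= \prod_(i <- s | P i) g i by [].
apply: (big_ind2 (fun x y => 0 <= x <= y)) => [|x1 x2 y1 y2|//].
  by rewrite lee01 lexx.
move=> /andP[x10 x1y1] /andP[x20 x2y2].
by rewrite mule_ge0 //= lee_pmul.
Qed.

Lemma lne_sum_expeR_le (R : realType) (I : finType) (P Q : pred I)
    (f g : I -> \bar R) :
  (forall i, P i -> Q i) -> (forall i, P i -> f i <= g i) ->
  lne (\sum_(i | P i) expeR (f i)) <= lne (\sum_(i | Q i) expeR (g i)).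
Proof.
move=> PQ fg.
have sum_in_itv (B : pred I) (h : I -> \bar R) :
    \sum_(i | B i) expeR (h i) \in `[0, +oo].
  by rewrite in_itv /= leey andbT sume_ge0 // => i _; apply: expeR_ge0.
rewrite lee_lne ?sum_in_itv //.
apply: (le_trans (y := \sum_(i | P i) expeR (g i))).
  by apply: lee_sum => i Pi; rewrite lee_expeR fg.
apply: lee_sum_nneg_subset => [i|i _]; [exact: PQ | exact: expeR_ge0].
Qed.

Section SoftValues.
Variables (R : realType) (X A : finType).
Variables (S : X -> A -> X -> R) (r : X -> A -> R) (w : X -> R).
Hypothesis S_ge0 : forall x a x', (0 <= S x a x')%R.

(* Q^soft is monotone in the continuation value, as transitions are >= 0. *)
Lemma Qsoft_mono (V V' : X -> \bar R) a x :
  (forall x', V x' <= V' x') -> Qsoft S r V a x <= Qsoft S r V' a x.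
Proof.
move=> VV'; rewrite /Qsoft leeD2l // lee_sum // => x' _.
by rewrite lee_wpmul2l // lee_fin.
Qed.

Lemma Vrem_mono (C C' : candidate R X A) :
  (forall a x, Phi S C a x -> Phi S C' a x) ->
  forall k x, Vrem S r w C k x <= Vrem S r w C' k x.
Proof.
move=> CC' k; elim: k => [//|k IH] x /=.
apply: lne_sum_expeR_le => [a|a _]; [exact: CC' | exact: Qsoft_mono].
Qed.

End SoftValues.

Local Close Scope ereal_scope.

Section ThresholdCandidates.
Variables (R : realType) (X A : finType).
Variables (S : X -> A -> X -> R) (C : candidate R X A) (xstar : X).

Lemma Phi_Cp_mono (p q : R) a x :
  p <= q -> Phi S (Cp C xstar p) a x -> Phi S (Cp C xstar q) a x.
Proof.
move=> pq /andP[aC /forallP Sle]; rewrite /Phi aC; apply/forallP => xh.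
by move: (Sle xh); rewrite /Cp /=; case: eqP => // _ /le_trans; apply.
Qed.

Lemma Phi_CpE (p q : R) a x :
  Phi S (Cp C xstar q) a x -> Phi S (Cp C xstar p) a x = (S x a xstar <= p).
Proof.
case/andP=> aC /forallP Sle; rewrite /Phi aC /=; apply/forallP/idP.
  by move/(_ xstar); rewrite /Cp /= eqxx.
move=> Sp xh; move: (Sle xh); rewrite /Cp /=.
by case: eqP => [->|].
Qed.

Variables (T n : nat) (D : 'I_n -> (nat -> X) * (nat -> A)).

Lemma consistent_CpP (p q : R) :
  consistent S T D (Cp C xstar q) ->
  consistent S T D (Cp C xstar p) <->
  (forall i t, (t < T)%N -> S ((D i).1 t) ((D i).2 t) xstar <= p).
Proof.
move=> Dq; split=> Dp i t tT; first by rewrite -(Phi_CpE p (Dq i t tT)) Dp.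
by rewrite (Phi_CpE p (Dq i t tT)) Dp.
Qed.

Lemma pstar_leP (p : R) : 0 <= p ->
  pstar S T D xstar <= p <->
  (forall i t, (t < T)%N -> S ((D i).1 t) ((D i).2 t) xstar <= p).
Proof.
move=> p0; split=> [psp i t tT | Sp].
  apply: le_trans psp; apply: le_trans (le_bigmax _ _ i).
  exact: (le_bigmax _ (fun t : 'I_T => S ((D i).1 t) ((D i).2 t) xstar)
            (Ordinal tT)).
by apply: bigmax_le => // i _; apply: bigmax_le => // t _; apply: Sp.
Qed.

End ThresholdCandidates.

Lemma Vsoft_Cp_mono (R : realType) (X A : finType) (S : X -> A -> X -> R)
    (r : X -> A -> R) (w : X -> R) (C : candidate R X A) (xstar : X)
    (T t : nat) (p q : R) x :
  (forall x a x', 0 <= S x a x') -> p <= q ->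
  (Vsoft S r w T (Cp C xstar p) t x <= Vsoft S r w T (Cp C xstar q) t x)%E.
Proof.
by move=> S_ge0 pq; apply: Vrem_mono => // a y; apply: Phi_Cp_mono.
Qed.

Theorem corollary1 (R : realType) (X A : finType) (T : nat)
  (S : X -> A -> X -> R) (r : X -> A -> R) (w : X -> R)
  (HS0 : forall x a x', 0 <= S x a x')
  (HS1 : forall x a, \sum_(x' : X) S x a x' = 1)
  (x0 : X) (n : nat) (D : 'I_n -> (nat -> X) * (nat -> A))
  (HD0 : forall i : 'I_n, (D i).1 0%N = x0)
  (C : candidate R X A) (Hpsi : forall x, 0 <= C.1 x <= 1)
  (xstar : X)
  (HC1 : consistent S T D (Cp C xstar 1)) :
  let ps := pstar S T D xstar in
  (forall p : R, 0 <= p <= 1 ->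
     (consistent S T D (Cp C xstar p) <-> ps <= p)) /\
  (forall p : R, 0 <= p <= 1 -> ps <= p ->
     (Vsoft S r w T (Cp C xstar ps) 0 x0 <= Vsoft S r w T (Cp C xstar p) 0 x0)%E) /\
  (forall C0 : candidate R X A,
     Vsoft S r w T C0 0 x0 \is a fin_num ->
     forall p : R, 0 <= p <= 1 -> ps <= p ->
     (Fsoft S r w T C0 (Cp C xstar ps) 0 x0 <= Fsoft S r w T C0 (Cp C xstar p) 0 x0)%E) /\
  (forall ER : 'I_n -> R, forall p : R, 0 <= p <= 1 -> ps <= p ->
     (\prod_(i < n) expeR ((ER i)%:E - Vsoft S r w T (Cp C xstar p) 0 x0)
      <= \prod_(i < n) expeR ((ER i)%:E - Vsoft S r w T (Cp C xstar ps) 0 x0))%E).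
Proof.
move=> ps.
split=> [p /andP[p0 _]|].
  by rewrite (consistent_CpP p HC1) (pstar_leP S xstar T D p0).
split=> [p _|]; first exact: Vsoft_Cp_mono.
split=> [C0 _ p _ psp|ER p _ psp].
  by rewrite /Fsoft lee_expeR leeB // Vsoft_Cp_mono.
apply: lee_prod_nneg => i _.
by rewrite expeR_ge0 /= lee_expeR leeB // Vsoft_Cp_mono.
Qed.
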